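(* Let a Hedonic diversity game contain a red agent $R$, a blue agent $B$ and $m\ge 1$ green agents, where the red, blue and green color classes are exactly $\{R\}$, $\{B\}$ and the set of these $m$ green agents, respectively (other colors may be present). For $j\in[m]$ write $G^jR$ (resp. $G^jB$) for the palette of a set consisting of $j$ green agents and $R$ (resp. $B$), write $RB$ for the palette of $\{R,B\}$, $\mathbf{R}$ for the palette of $\{R\}$, $\mathbf{B}$ for the palette of $\{B\}$, and $\mathbf{G}$ for the palette of any nonempty set of green agents only. Let $\mathcal{M}_G$ be a set of palettes, each of which is the palette of a set containing at least one green agent and at least one agent that is neither red, blue nor green. Suppose the preferences are: $R$: $RB \succ G^mR\succ\cdots\succ G^1R \succ \mathbf{R} \succ$ every other palette; $B$: $G^mB\succ\cdots\succ G^1B \succ RB \succ \mathbf{B}\succ$ every other palette; every green agent: every palette in $\mathcal{M}_G$ (in arbitrary mutual order) $\succ G^mR\succ\cdots\succ G^1R\succ G^mB\succ\cdots\succ G^1B\succ \mathbf{G}\succ$ every other palette. Then every outcome in which some green agent belongs to a coalition whose palette is not in $\mathcal{M}_G$ is neither individually stable nor Nash stable.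
   Context: A Hedonic diversity game consists of a set $N=[n]$ of agents partitioned into color classes $D_1,\dots,D_\gamma$, and, for each agent $i\in N$, a weak order $\succeq_i$ over palettes, where the palette of a nonempty set $X\subseteq N$ is the tuple $\left(|D_c\cap X|/|X|\right)_{c\in[\gamma]}$; agent $i$ compares nonempty sets $X,Y\subseteq N$ through their palettes. A coalition is a nonempty subset of $N$. An outcome is a partition $\Pi$ of $N$ into coalitions; $\Pi_i$ denotes the coalition of $\Pi$ containing agent $i$. Agent $i$ has an NS-deviation if there is $C\in\Pi\cup\{\emptyset\}$ with $i\notin C$ and $C\cup\{i\}\succ_i\Pi_i$; it is an IS-deviation if moreover $C\cup\{i\}\succeq_j C$ for every $j\in C$. $\Pi$ is Nash stable if no agent has an NS-deviation, and individually stable if no agent has an IS-deviation. *)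

From mathcomp Require Import all_boot all_order all_algebra.
Set Implicit Arguments. Unset Strict Implicit. Unset Printing Implicit Defensive.
Import Order.TTheory GRing.Theory Num.Theory.

Definition palette_t (gamma : nat) := {ffun 'I_gamma -> rat}.

Definition palette (n gamma : nat) (col : 'I_n -> 'I_gamma) (X : {set 'I_n})
  : palette_t gamma :=
  [ffun c => (#|[set i in X | col i == c]|%:R / #|X|%:R)%R].

Definition strict (T : Type) (r : rel T) (x y : T) : bool := r x y && ~~ r y x.

Definition weak_order (T : Type) (r : rel T) : Prop := total r /\ transitive r.

Section Game.
Variables (n gamma : nat) (col : 'I_n -> 'I_gamma)
          (pref : 'I_n -> rel (palette_t gamma)).

Definition sprefS (i : 'I_n) (X Y : {set 'I_n}) : bool :=
  strict (pref i) (palette col X) (palette col Y).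
Definition wprefS (i : 'I_n) (X Y : {set 'I_n}) : bool :=
  pref i (palette col X) (palette col Y).

(* outcomes: partitions of N into coalitions (nonempty blocks); Pi_i = pblock P i *)
Definition NS_deviation (P : {set {set 'I_n}}) (i : 'I_n) : Prop :=
  exists C : {set 'I_n}, (C \in P \/ C = set0) /\ i \notin C /\
    sprefS i (C :|: [set i]) (pblock P i).

Definition IS_deviation (P : {set {set 'I_n}}) (i : 'I_n) : Prop :=
  exists C : {set 'I_n}, (C \in P \/ C = set0) /\ i \notin C /\
    sprefS i (C :|: [set i]) (pblock P i) /\
    (forall j, j \in C -> wprefS j (C :|: [set i]) C).

Definition nash_stable (P : {set {set 'I_n}}) : Prop :=
  forall i, ~ NS_deviation P i.

Definition individually_stable (P : {set {set 'I_n}}) : Prop :=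
  forall i, ~ IS_deviation P i.
End Game.

Definition firstk (n : nat) (S : {set 'I_n}) (j : nat) : {set 'I_n} :=
  [set x in take j (enum S)].

(* Let g be a green agent whose coalition C has a palette outside M_G.  A palette
   of a coalition made of greens and exactly one of R, B determines which of R, B
   it contains and how many greens it has, so the palette of C is G, some G^jR,
   some G^jB, or something else; likewise for the coalitions of R and of B.
   - C is all green: if R sits with B (palette RB), then B joins C, since B ranks
     every G^jB above RB and the greens rank G^jB above G; otherwise R's coalition
     is G^jR (j >= 0, with G^0R = R) and g joins it.
   - C is G^jR: B is not with R; if B is alone, R joins B (RB is R's favourite);
     if B's coalition is G^iB, one of its greens joins C.
   - C is G^jB: R is not with B, its coalition is G^iR, and g joins it.
   In every remaining case some agent prefers being alone.  Each of these moves is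
   welcomed by the coalition joined, so it is an IS-deviation and a fortiori an
   NS-deviation.  The description of M_G plays no role. *)

From mathcomp Require Import all_boot all_order all_algebra.
From Stdlib Require Import Classical.
Import GRing.Theory Num.Theory.
Set Implicit Arguments. Unset Strict Implicit. Unset Printing Implicit Defensive.

Section WeakOrder.
Variables (T : Type) (r : rel T).
Hypothesis r_wo : weak_order r.

Lemma strictW a b : strict r a b -> r a b.
Proof. by case/andP. Qed.

Lemma weak_order_refl a : r a a.
Proof. by case: r_wo => /(_ a a); rewrite orbb. Qed.

Lemma le_strict_trans a b c : r a b -> strict r b c -> strict r a c.
Proof.
case: r_wo => _ tr rab /andP[rbc ncb]; rewrite /strict (tr _ _ _ rab rbc) /=.
by apply: contra ncb => rca; exact: tr rca rab.
Qed.

Lemma strict_le_trans a b c : strict r a b -> r b c -> strict r a c.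
Proof.
case: r_wo => _ tr /andP[rab nba] rbc; rewrite /strict (tr _ _ _ rab rbc) /=.
by apply: contra nba => rcb; exact: tr rbc rcb.
Qed.

Lemma strict_trans a b c : strict r a b -> strict r b c -> strict r a c.
Proof. by move/strictW; exact: le_strict_trans. Qed.

Lemma chain_le (f : nat -> T) lo hi :
  (forall j, lo <= j < hi -> strict r (f j.+1) (f j)) ->
  forall i k, lo <= i -> i <= k <= hi -> r (f k) (f i).
Proof.
move=> step i k lo_i; elim: k => [|k IHk].
  by rewrite leqn0 => /andP[/eqP-> _]; exact: weak_order_refl.
rewrite leq_eqVlt ltnS => /andP[/predU1P[-> _|ik khi]]; first exact: weak_order_refl.
case: r_wo => _ tr; apply: (tr (f k)).
  by apply/strictW/step; rewrite khi (leq_trans lo_i ik).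
by apply: IHk; rewrite ik ltnW.
Qed.

End WeakOrder.

Section Partition.
Variables (T : finType) (P : {set {set T}}).
Hypothesis partP : partition P [set: T].

Lemma cover_partitionT : cover P = [set: T].
Proof. by case/and3P: partP => /eqP. Qed.

Lemma pblock_self x : x \in pblock P x.
Proof. by rewrite mem_pblock cover_partitionT inE. Qed.

Lemma pblockT_mem x : pblock P x \in P.
Proof. by apply: pblock_mem; rewrite cover_partitionT inE. Qed.

Lemma pblock_eq x y : y \in pblock P x -> pblock P y = pblock P x.
Proof. by apply: same_pblock; case/and3P: partP. Qed.

Lemma pblock_neq0 x : pblock P x != set0.
Proof. by apply/set0Pn; exists x; exact: pblock_self. Qed.

End Partition.

Section Deviations.
Variables (n gamma : nat) (col : 'I_n -> 'I_gamma) (pref : 'I_n -> rel (palette_t gamma)).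
Variable P : {set {set 'I_n}}.

Lemma IS_deviation_unstable i : IS_deviation col pref P i ->
  ~ individually_stable col pref P /\ ~ nash_stable col pref P.
Proof.
move=> dev; split=> stable; apply: (stable i) => //.
by case: dev => C [C_P [iC [better _]]]; exists C.
Qed.

Lemma IS_deviation_alone i :
  strict (pref i) (palette col [set i]) (palette col (pblock P i)) ->
  IS_deviation col pref P i.
Proof.
move=> better; exists set0; split; first by right.
by rewrite inE set0U; split=> //; split=> // j; rewrite inE.
Qed.

End Deviations.

Section Palettes.
Local Open Scope ring_scope.
Variables (n gamma : nat) (col : 'I_n -> 'I_gamma).
Implicit Types (X Y S : {set 'I_n}) (c : 'I_gamma).
Local Notation pal := (palette col).

Definition colour_closed S := forall x y, col x = col y -> y \in S -> x \in S.

Lemma palette_col_neq0 X x : x \in X -> pal X (col x) != 0.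
Proof.
move=> xX; rewrite ffunE mulf_neq0 // ?invr_eq0 pnatr_eq0 cards_eq0; apply/set0Pn.
  by exists x; rewrite inE xX eqxx.
by exists x.
Qed.

Lemma palette_neq0_col X c : pal X c != 0 -> exists2 x, x \in X & col x = c.
Proof.
rewrite ffunE mulf_eq0 negb_or pnatr_eq0 cards_eq0 => /andP[/set0Pn[x] + _].
by rewrite inE => /andP[xX /eqP]; exists x.
Qed.

Lemma palette_eq_sub X Y S : colour_closed S -> Y \subset S -> pal X = pal Y -> X \subset S.
Proof.
move=> closedS YS eXY; apply/subsetP => x xX.
have := palette_col_neq0 xX; rewrite eXY => /palette_neq0_col[y yY col_yx].
exact: closedS (esym col_yx) (subsetP YS y yY).
Qed.

Lemma palette_eq_mem a X Y : [set i | col i == col a] = [set a] ->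
  a \in Y -> pal X = pal Y -> a \in X.
Proof.
move=> class_a aY eXY; have := palette_col_neq0 aY; rewrite -eXY.
case/palette_neq0_col => x xX col_xa.
have : x \in [set i | col i == col a] by rewrite inE col_xa.
by rewrite class_a inE => /eqP <-.
Qed.

Lemma palette_eq_set1 a X : [set i | col i == col a] = [set a] ->
  X != set0 -> pal X = pal [set a] -> X = [set a].
Proof.
move=> class_a X0 eXa.
have : X \subset [set a].
  by apply: palette_eq_sub (subxx _) eXa => x y col_xy; rewrite -class_a !inE col_xy.
by rewrite subset1 (negbTE X0) orbF => /eqP.
Qed.

Lemma palette_monochrome X c : X != set0 -> {in X, forall x, col x = c} ->
  pal X = [ffun d => (d == c)%:R].
Proof.
move=> X0 Xc; apply/ffunP => d; rewrite !ffunE.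
have [->|dc] := eqVneq d c.
  rewrite (_ : [set i in X | col i == c] = X) ?divff ?pnatr_eq0 ?cards_eq0 //.
  by apply/setP => x; rewrite inE andb_idr // => /Xc ->.
rewrite (_ : [set i in X | col i == d] = set0) ?cards0 ?mul0r //.
apply/setP => x; rewrite !inE; apply/negbTE; apply/andP => -[/Xc -> /eqP dc'].
by rewrite dc' eqxx in dc.
Qed.

End Palettes.

Section FirstK.
Variables (n : nat) (S : {set 'I_n}).

Lemma firstk0 : firstk S 0 = set0.
Proof. by apply/setP => x; rewrite !inE take0. Qed.

Lemma firstk_sub j : firstk S j \subset S.
Proof. by apply/subsetP => x; rewrite inE => /mem_take; rewrite mem_enum. Qed.

Lemma card_firstk j : j <= #|S| -> #|firstk S j| = j.
Proof.
move=> jS; rewrite /firstk cardsE (card_uniqP _) ?take_uniq ?enum_uniq //.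
by rewrite size_takel // -cardE.
Qed.

End FirstK.

Section SpecialAndGreens.
Variables (n gamma : nat) (col : 'I_n -> 'I_gamma) (a : 'I_n) (G : {set 'I_n}).
Variables (ca cG : 'I_gamma).
Hypotheses (ca_cG : ca != cG) (class_a : [set i | col i == ca] = [set a])
  (class_G : [set i | col i == cG] = G).
Implicit Types X : {set 'I_n}.
Local Notation pal := (palette col).
Local Notation Ga j := (pal (firstk G j :|: [set a])).

Lemma col_special i : (col i == ca) = (i == a).
Proof. by rewrite -[i == a]in_set1 -class_a inE. Qed.

Lemma col_specialE : col a = ca.
Proof. by apply/eqP; rewrite col_special. Qed.

Lemma col_green i : (col i == cG) = (i \in G).
Proof. by rewrite -class_G inE. Qed.

Lemma special_notin_greens : a \notin G.
Proof. by rewrite -col_green col_specialE. Qed.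

Lemma special_greens_closed : colour_closed col (a |: G).
Proof. by move=> x y col_xy; rewrite !inE -!col_special -!col_green col_xy. Qed.

Lemma count_special X c : X \subset a |: G -> a \in X ->
  #|[set i in X | col i == c]| = ((c == ca) + (c == cG) * #|X :&: G|)%N.
Proof.
move=> XS aX; have [->|c_a] := eqVneq c ca.
  rewrite (negbTE ca_cG) mul0n addn0 /= -(cards1 a); apply: eq_card => i.
  by rewrite !inE col_special andb_idl // => /eqP ->.
have [->|c_G] := eqVneq c cG.
  by rewrite mul1n; apply: eq_card => i; rewrite !inE col_green.
rewrite /=; apply/eqP; rewrite cards_eq0; apply/eqP/setP => i.
rewrite !inE; apply/negbTE/andP => -[/(subsetP XS)].
by rewrite !inE => /orP[/eqP-> /eqP col_a|iG /eqP col_i];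
  [move: c_a; rewrite -col_a col_specialE eqxx | move: c_G; rewrite -col_i col_green iG].
Qed.

Lemma card_special X : X \subset a |: G -> a \in X -> #|X| = #|X :&: G|.+1.
Proof.
move=> XS aX; rewrite {1}(_ : X = a |: (X :&: G)).
  by rewrite cardsU1 inE (negbTE special_notin_greens) andbF.
apply/setP => i; rewrite !inE; have [->|ia] /= := eqVneq i a; first by rewrite aX.
by apply/idP/andP => [iX|[]//]; split=> //; have := subsetP XS i iX; rewrite !inE (negbTE ia).
Qed.

Lemma palette_special X : X \subset a |: G -> a \in X ->
  pal X = [ffun c => ((c == ca) + (c == cG) * #|X :&: G|)%N%:R / (#|X :&: G|.+1)%:R]%R.
Proof. by move=> XS aX; apply/ffunP => c; rewrite !ffunE count_special // (card_special XS aX). Qed.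

Lemma firstk_special_sub j : firstk G j :|: [set a] \subset a |: G.
Proof. by rewrite setUC setUS // firstk_sub. Qed.

Lemma firstk_special_mem j : a \in firstk G j :|: [set a].
Proof. by rewrite !inE eqxx orbT. Qed.

Lemma setIU_special X : (X :|: [set a]) :&: G = X :&: G.
Proof.
rewrite setIUl (_ : [set a] :&: G = set0) ?setU0 //.
apply/setP => i; rewrite !inE; case: eqVneq => // ->.
exact: negbTE special_notin_greens.
Qed.

Lemma card_Ga_greens j : j <= #|G| -> #|(firstk G j :|: [set a]) :&: G| = j.
Proof. by move=> jG; rewrite setIU_special (setIidPl (firstk_sub _ _)) card_firstk. Qed.

Lemma palette_Ga X : X \subset a |: G -> a \in X -> pal X = Ga #|X :&: G|.
Proof.
move=> XS aX; have kG : #|X :&: G| <= #|G| by rewrite subset_leq_card ?subsetIr.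
rewrite palette_special // [RHS]palette_special ?firstk_special_sub ?firstk_special_mem //.
by rewrite card_Ga_greens.
Qed.

Lemma palette_Ga_inv X j : j <= #|G| -> pal X = Ga j ->
  [/\ X \subset a |: G, a \in X & #|X :&: G| = j].
Proof.
move=> jG eX; have XS := palette_eq_sub special_greens_closed (firstk_special_sub j) eX.
have aX : a \in X.
  by apply: palette_eq_mem eX; rewrite ?firstk_special_mem // col_specialE.
(* The [ca]-entry of a palette of this shape is [1 / (#greens + 1)]. *)
split=> //; have /= := congr1 (fun p : palette_t gamma => p ca) eX.
rewrite palette_special // palette_special ?firstk_special_sub ?firstk_special_mem //.
rewrite card_Ga_greens // !ffunE eqxx (negbTE ca_cG) mul0n addn0 !mul1r.
by move/invr_inj/eqP; rewrite eqr_nat eqSS => /eqP.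
Qed.

End SpecialAndGreens.

Section Game.
Variables (n gamma : nat) (col : 'I_n -> 'I_gamma) (R B : 'I_n) (Gs : {set 'I_n}).
Variables (cR cB cG : 'I_gamma).
Hypotheses (HcRB : cR != cB) (HcRG : cR != cG) (HcBG : cB != cG)
  (HDR : [set i | col i == cR] = [set R])
  (HDB : [set i | col i == cB] = [set B])
  (HDG : [set i | col i == cG] = Gs).
Variables (pref : 'I_n -> rel (palette_t gamma)) (MG : palette_t gamma -> Prop).
Hypothesis Hwo : forall i, weak_order (pref i).
Implicit Types X : {set 'I_n}.

Local Notation pal X := (palette col X).
Local Notation m := #|Gs|.
Local Notation GjR j := (pal (firstk Gs j :|: [set R])).
Local Notation GjB j := (pal (firstk Gs j :|: [set B])).
Local Notation RB := (pal [set R; B]).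
Local Notation Rp := (pal [set R]).
Local Notation Bp := (pal [set B]).
Local Notation Gp := (pal Gs).

Hypotheses
 (hR1 : strict (pref R) RB (GjR m))
 (hR2 : forall j, 1 <= j < m -> strict (pref R) (GjR j.+1) (GjR j))
 (hR3 : strict (pref R) (GjR 1) Rp)
 (hR4 : forall X : {set 'I_n}, X != set0 ->
     pal X <> RB -> pal X <> Rp ->
     (forall j, 1 <= j <= m -> pal X <> GjR j) ->
     strict (pref R) Rp (pal X))
 (hB1 : forall j, 1 <= j < m -> strict (pref B) (GjB j.+1) (GjB j))
 (hB2 : strict (pref B) (GjB 1) RB)
 (hB3 : strict (pref B) RB Bp)
 (hB4 : forall X : {set 'I_n}, X != set0 ->
     pal X <> RB -> pal X <> Bp ->
     (forall j, 1 <= j <= m -> pal X <> GjB j) ->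
     strict (pref B) Bp (pal X))
 (hG : forall g, g \in Gs ->
     (forall p, MG p -> strict (pref g) p (GjR m)) /\
     (forall j, 1 <= j < m -> strict (pref g) (GjR j.+1) (GjR j)) /\
     strict (pref g) (GjR 1) (GjB m) /\
     (forall j, 1 <= j < m -> strict (pref g) (GjB j.+1) (GjB j)) /\
     strict (pref g) (GjB 1) Gp /\
     (forall X : {set 'I_n}, X != set0 ->
        ~ MG (pal X) -> pal X <> Gp ->
        (forall j, 1 <= j <= m -> pal X <> GjR j) ->
        (forall j, 1 <= j <= m -> pal X <> GjB j) ->
        strict (pref g) Gp (pal X))).

Lemma R_notin_greens : R \notin Gs.
Proof. exact: special_notin_greens HcRG HDR HDG. Qed.

Lemma B_notin_greens : B \notin Gs.
Proof. exact: special_notin_greens HcBG HDB HDG. Qed.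

Lemma R_neq_B : R != B.
Proof.
by apply: contraNneq HcRB => eRB; rewrite -(col_specialE HDR) -(col_specialE HDB) eRB.
Qed.

Lemma B_notin_RGs X : X \subset R |: Gs -> B \notin X.
Proof.
by move=> XS; apply: contra B_notin_greens => /(subsetP XS); rewrite !inE eq_sym (negbTE R_neq_B).
Qed.

Lemma R_notin_BGs X : X \subset B |: Gs -> R \notin X.
Proof.
by move=> XS; apply: contra R_notin_greens => /(subsetP XS); rewrite !inE (negbTE R_neq_B).
Qed.

Lemma palette_greens X : X \subset Gs -> X != set0 -> pal X = Gp.
Proof.
have mono (Y : {set 'I_n}) : Y \subset Gs -> Y != set0 -> pal Y = [ffun d => (d == cG)%:R]%R.
  move=> YG Y0; apply: palette_monochrome Y0 _ => y /(subsetP YG).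
  by rewrite -(col_green HDG) => /eqP.
move=> XG X0; rewrite !mono //; apply: contraNneq X0 => G0.
by rewrite -subset0 -G0.
Qed.

Lemma R_step i : i < m -> strict (pref R) (GjR i.+1) (GjR i).
Proof. by case: i => [_|i im]; [rewrite firstk0 set0U | apply: hR2]. Qed.

Lemma R_RB_GjR k : k <= m -> strict (pref R) RB (GjR k).
Proof.
move=> km; apply: (strict_le_trans (Hwo R) hR1).
apply: (chain_le (Hwo R) (f := fun j => GjR j) (lo := 0) (hi := m)); rewrite ?km ?leqnn //.
by move=> j /andP[_]; exact: R_step.
Qed.

Lemma B_GjB_RB k : 1 <= k <= m -> strict (pref B) (GjB k) RB.
Proof.
move=> km; apply: (le_strict_trans (Hwo B) _ hB2).
exact: (chain_le (Hwo B) (f := fun j => GjB j)) hB1 _ _ (leqnn 1) km.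
Qed.

Section Greens.
Variables (g : 'I_n) (gG : g \in Gs).

Lemma green_GjR_step j : 1 <= j < m -> strict (pref g) (GjR j.+1) (GjR j).
Proof. by case: (hG gG) => _ [stepR _]; exact: stepR. Qed.

Lemma green_GjR_GjB k i : 1 <= k <= m -> 1 <= i <= m -> strict (pref g) (GjR k) (GjB i).
Proof.
move=> km im; have [_ [stepR [R1_Bm [stepB _]]]] := hG gG.
apply: (le_strict_trans (Hwo g) _ (strict_le_trans (Hwo g) R1_Bm _)).
  exact: (chain_le (Hwo g) (f := fun j => GjR j)) stepR _ _ (leqnn 1) km.
case/andP: im => i1 im.
by apply: (chain_le (Hwo g) (f := fun j => GjB j)) stepB _ _ i1 _; rewrite im /=.
Qed.

Lemma green_GjB_Gp k : 1 <= k <= m -> strict (pref g) (GjB k) Gp.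
Proof.
move=> km; have [_ [_ [_ [stepB [B1_G _]]]]] := hG gG.
apply: (le_strict_trans (Hwo g) _ B1_G).
exact: (chain_le (Hwo g) (f := fun j => GjB j)) stepB _ _ (leqnn 1) km.
Qed.

Lemma green_GjR_Gp k : 1 <= k <= m -> strict (pref g) (GjR k) Gp.
Proof.
move=> km; have m1 : 1 <= 1 <= m by case/andP: km => k1 km; rewrite (leq_trans k1 km).
exact: (strict_trans (Hwo g) (green_GjR_GjB km m1) (green_GjB_Gp m1)).
Qed.

End Greens.

Variable P : {set {set 'I_n}}.
Hypothesis partP : partition P [set: 'I_n].

Local Notation blk x := (pblock P x).
Local Notation deviates i := (IS_deviation col pref P i).

Lemma R_block_cases :
  [\/ pal (blk R) = RB, exists2 j, j <= m & pal (blk R) = GjR j | deviates R].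
Proof.
have [eRB|nRB] := eqVneq (pal (blk R)) RB; first by constructor 1.
have [[j jm eR]|noGjR] := classic (exists2 j, j <= m & pal (blk R) = GjR j).
  by constructor 2; exists j.
constructor 3; apply: IS_deviation_alone; apply: hR4.
- exact: pblock_neq0.
- exact/eqP.
- by move=> eR; apply: noGjR; exists 0; rewrite ?firstk0 ?set0U.
- by move=> j /andP[_ jm] eR; apply: noGjR; exists j.
Qed.

Lemma B_block_cases :
  [\/ pal (blk B) = RB, blk B = [set B],
      exists2 j, 1 <= j <= m & pal (blk B) = GjB j | deviates B].
Proof.
have [eRB|nRB] := eqVneq (pal (blk B)) RB; first by constructor 1.
have [eB|nB] := eqVneq (pal (blk B)) Bp.
  by constructor 2; apply: palette_eq_set1 eB; rewrite ?(col_specialE HDB) ?pblock_neq0.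
have [[j jm eB]|noGjB] := classic (exists2 j, 1 <= j <= m & pal (blk B) = GjB j).
  by constructor 3; exists j.
constructor 4; apply: IS_deviation_alone; apply: hB4.
- exact: pblock_neq0.
- exact/eqP.
- exact/eqP.
- by move=> j jm eB; apply: noGjB; exists j.
Qed.

Lemma greens_closed : colour_closed col Gs.
Proof. by move=> x y col_xy; rewrite -!(col_green HDG) col_xy. Qed.

Lemma green_joins_R a j : a \in Gs -> a \notin blk R -> j <= m -> pal (blk R) = GjR j ->
  (forall k, 1 <= k <= m -> strict (pref a) (GjR k) (pal (blk a))) -> deviates a.
Proof.
move=> aG a_R jm eR prefa; have [RS R_R cardR] := palette_Ga_inv HcRG HDR HDG jm eR.
have jm' : j < m.
  rewrite -cardR; apply: proper_card; rewrite properE subsetIr /=.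
  by apply/subsetPn; exists a; rewrite // inE (negbTE a_R).
have e_new : pal (blk R :|: [set a]) = GjR j.+1.
  rewrite (palette_Ga HcRG HDR HDG); first last.
  - by rewrite inE R_R.
  - by rewrite subUset RS sub1set !inE aG orbT.
  have -> : (blk R :|: [set a]) :&: Gs = a |: (blk R :&: Gs).
    by rewrite setIUl setUC (_ : [set a] :&: Gs = [set a]) //; apply/setIidPl; rewrite sub1set.
  by rewrite cardsU1 inE (negbTE a_R) cardR.
exists (blk R); split; first by left; exact: pblockT_mem.
rewrite /sprefS /wprefS e_new; split=> //; split; first by apply: prefa; rewrite jm'.
move=> x xR; rewrite eR; apply: strictW.
case/setU1P: (subsetP RS x xR) => [->|xG]; first exact: R_step.
apply: (green_GjR_step xG); rewrite jm' andbT -cardR.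
by apply/card_gt0P; exists x; rewrite inE xR.
Qed.

Lemma R_joins_B j : blk B = [set B] -> j <= m -> pal (blk R) = GjR j -> deviates R.
Proof.
move=> eB jm eR; exists [set B]; split; first by left; rewrite -eB; exact: pblockT_mem.
split; first by rewrite inE; exact: R_neq_B.
rewrite /sprefS /wprefS setUC; split; first by rewrite eR; exact: R_RB_GjR.
by move=> x /set1P ->; exact: strictW hB3.
Qed.

Lemma B_joins_greens C : C \in P -> C != set0 -> pal C = Gp -> pal (blk B) = RB ->
  deviates B.
Proof.
move=> CP C0 eC eB; have CG := palette_eq_sub greens_closed (subxx Gs) eC.
have kC : 1 <= #|C| <= m by rewrite card_gt0 C0 subset_leq_card.
have e_new : pal (C :|: [set B]) = GjB #|C|.
  have CBS : C :|: [set B] \subset B |: Gs.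
    by rewrite subUset (subset_trans CG (subsetUr _ _)) sub1set setU11.
  have BCB : B \in C :|: [set B] by rewrite !inE eqxx orbT.
  by rewrite (palette_Ga HcBG HDB HDG CBS BCB) (setIU_special HcBG HDB HDG) (setIidPl CG).
exists C; split; first by left.
split; first by apply: contra B_notin_greens => /(subsetP CG).
rewrite /sprefS /wprefS e_new eB; split; first exact: B_GjB_RB.
by move=> x xC; rewrite eC; exact/strictW/(green_GjB_Gp (subsetP CG x xC) kC).
Qed.

Lemma green_in_green_block g : g \in Gs -> pal (blk g) = Gp -> exists i, deviates i.
Proof.
move=> gG eC; have CG := palette_eq_sub greens_closed (subxx Gs) eC.
case: R_block_cases => [eRB | [j jm eR] | devR]; last by exists R.
  have BR : B \in blk R.
    by apply: palette_eq_mem eRB; rewrite ?(col_specialE HDB) // !inE eqxx orbT.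
  exists B; apply: B_joins_greens (pblockT_mem partP g) (pblock_neq0 partP g) eC _.
  by rewrite (pblock_eq partP BR).
have g_R : g \notin blk R.
  apply: contra R_notin_greens => gR; apply: (subsetP CG).
  by rewrite (pblock_eq partP gR); exact: pblock_self.
by exists g; apply: (green_joins_R gG g_R jm eR) => k km; rewrite eC; exact: green_GjR_Gp.
Qed.

Lemma green_in_R_block g j : g \in Gs -> j <= m -> pal (blk g) = GjR j ->
  exists i, deviates i.
Proof.
move=> gG jm eC; have [CS RC _] := palette_Ga_inv HcRG HDR HDG jm eC.
have eRg : blk R = blk g := pblock_eq partP RC.
have B_R : B \notin blk R by rewrite eRg; exact: B_notin_RGs.
case: B_block_cases => [eRB | eB | [i im eB] | devB]; last by exists B.
- have RB_ : R \in blk B by apply: palette_eq_mem eRB; rewrite ?(col_specialE HDR) // !inE eqxx.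
  by case/negP: B_R; rewrite (pblock_eq partP RB_); exact: pblock_self.
- by exists R; apply: R_joins_B eB jm _; rewrite eRg.
have [_ _ cardB] := palette_Ga_inv HcBG HDB HDG (proj2 (andP im)) eB.
have [h] : exists h, h \in blk B :&: Gs.
  by apply/set0Pn; rewrite -card_gt0 cardB; case/andP: im.
rewrite inE => /andP[hB h_green]; have ehB := pblock_eq partP hB.
have h_R : h \notin blk R.
  by apply: contra B_R => hR; rewrite -(pblock_eq partP hR) ehB; exact: pblock_self.
have eR : pal (blk R) = GjR j by rewrite eRg.
by exists h; apply: (green_joins_R h_green h_R jm eR) => k km; rewrite ehB eB; exact: green_GjR_GjB.
Qed.

Lemma green_in_B_block g j : g \in Gs -> 1 <= j <= m -> pal (blk g) = GjB j ->
  exists i, deviates i.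
Proof.
move=> gG jm eC; have [CS BC _] := palette_Ga_inv HcBG HDB HDG (proj2 (andP jm)) eC.
have R_C : R \notin blk g := R_notin_BGs CS.
case: R_block_cases => [eRB | [i im eR] | devR]; last by exists R.
  have BR : B \in blk R.
    by apply: palette_eq_mem eRB; rewrite ?(col_specialE HDB) // !inE eqxx orbT.
  case/negP: R_C; rewrite -(pblock_eq partP BC) (pblock_eq partP BR); exact: pblock_self.
have g_R : g \notin blk R.
  by apply: contra R_C => gR; rewrite (pblock_eq partP gR); exact: pblock_self.
by exists g; apply: (green_joins_R gG g_R im eR) => k km; rewrite eC; exact: green_GjR_GjB.
Qed.

Lemma green_block_unstable g : g \in Gs -> ~ MG (pal (blk g)) -> exists i, deviates i.
Proof.
move=> gG notMG.
have [eC|nGp] := eqVneq (pal (blk g)) Gp; first exact: green_in_green_block eC.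
have [[j jm eC]|noGjR] := classic (exists2 j, 1 <= j <= m & pal (blk g) = GjR j).
  by apply: green_in_R_block gG _ eC; case/andP: jm.
have [[j jm eC]|noGjB] := classic (exists2 j, 1 <= j <= m & pal (blk g) = GjB j).
  exact: green_in_B_block gG jm eC.
exists g; apply: IS_deviation_alone; have [_ [_ [_ [_ [_ others]]]]] := hG gG.
rewrite palette_greens ?sub1set //; last by apply/set0Pn; exists g; rewrite inE.
apply: others => //; [exact: pblock_neq0 | exact/eqP | |].
- by move=> j jm eC; apply: noGjR; exists j.
- by move=> j jm eC; apply: noGjB; exists j.
Qed.

End Game.

Theorem mainTheorem6
  (n gamma : nat) (col : 'I_n -> 'I_gamma)
  (pref : 'I_n -> rel (palette_t gamma))
  (Hwo : forall i, weak_order (pref i))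
  (R B : 'I_n) (Gs : {set 'I_n}) (cR cB cG : 'I_gamma)
  (HcRB : cR != cB) (HcRG : cR != cG) (HcBG : cB != cG)
  (HDR : [set i | col i == cR] = [set R])
  (HDB : [set i | col i == cB] = [set B])
  (HDG : [set i | col i == cG] = Gs)
  (Hm : 1 <= #|Gs|)
  (MG : palette_t gamma -> Prop)
  (HMG : forall p, MG p -> exists X : {set 'I_n},
      (exists2 g, g \in X & g \in Gs) /\
      (exists2 o, o \in X & [&& col o != cR, col o != cB & col o != cG]) /\
      p = palette col X) :
  let m := #|Gs| in
  let GjR j := palette col (firstk Gs j :|: [set R]) in
  let GjB j := palette col (firstk Gs j :|: [set B]) in
  let RB := palette col [set R; B] in
  let Rp := palette col [set R] in
  let Bp := palette col [set B] in
  let Gp := palette col Gs in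
  (* preferences of R *)
  strict (pref R) RB (GjR m) ->
  (forall j, 1 <= j < m -> strict (pref R) (GjR j.+1) (GjR j)) ->
  strict (pref R) (GjR 1) Rp ->
  (forall X : {set 'I_n}, X != set0 ->
     palette col X <> RB -> palette col X <> Rp ->
     (forall j, 1 <= j <= m -> palette col X <> GjR j) ->
     strict (pref R) Rp (palette col X)) ->
  (* preferences of B *)
  (forall j, 1 <= j < m -> strict (pref B) (GjB j.+1) (GjB j)) ->
  strict (pref B) (GjB 1) RB ->
  strict (pref B) RB Bp ->
  (forall X : {set 'I_n}, X != set0 ->
     palette col X <> RB -> palette col X <> Bp ->
     (forall j, 1 <= j <= m -> palette col X <> GjB j) ->
     strict (pref B) Bp (palette col X)) ->
  (* preferences of every green agent *)
  (forall g, g \in Gs ->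
     (forall p, MG p -> strict (pref g) p (GjR m)) /\
     (forall j, 1 <= j < m -> strict (pref g) (GjR j.+1) (GjR j)) /\
     strict (pref g) (GjR 1) (GjB m) /\
     (forall j, 1 <= j < m -> strict (pref g) (GjB j.+1) (GjB j)) /\
     strict (pref g) (GjB 1) Gp /\
     (forall X : {set 'I_n}, X != set0 ->
        ~ MG (palette col X) -> palette col X <> Gp ->
        (forall j, 1 <= j <= m -> palette col X <> GjR j) ->
        (forall j, 1 <= j <= m -> palette col X <> GjB j) ->
        strict (pref g) Gp (palette col X))) ->
  forall P : {set {set 'I_n}}, partition P [set: 'I_n] ->
    (exists2 g, g \in Gs & ~ MG (palette col (pblock P g))) ->
    ~ individually_stable col pref P /\ ~ nash_stable col pref P.
Proof.
move=> m GjR GjB RB Rp Bp Gp hR1 hR2 hR3 hR4 hB1 hB2 hB3 hB4 hG P partP [g gG notMG].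
have [i dev] := green_block_unstable HcRB HcRG HcBG HDR HDB HDG Hwo hR1 hR2 hR3 hR4
  hB1 hB2 hB3 hB4 hG partP gG notMG.
exact: IS_deviation_unstable dev.
Qed.
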